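(* The set of all values $|\Lambda_h:\Gamma|$ for $\Gamma\in\mathrm{WR}(\Lambda_h)$ equals the set of integers $3^u j^2 d(2m-n)n$, where $u\in\{0,1\}$, $j,d,m,n\in\mathbb{Z}_{>0}$, $d$ is $1$ or a product of distinct primes congruent to $1$ modulo $3$, $\gcd(m,n)=1$, $3\nmid(m+n)$, and $1\le m/n\le 2$.
   Context: $\Lambda_h = \begin{bmatrix} 1 & -1/2 \\ 0 & \sqrt3/2\end{bmatrix}\mathbb{Z}^2$. For a full-rank sublattice $\Gamma\subseteq\Lambda_h$, $|\Lambda_h:\Gamma|=\det\Gamma/\det\Lambda_h$. A full-rank lattice is well-rounded (WR) if it has a basis consisting of vectors of minimal nonzero Euclidean norm; $\mathrm{WR}(\Lambda_h)$ is the set of full-rank WR sublattices of $\Lambda_h$. *)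

From Stdlib Require Import Reals ZArith List Znumtheory.
Open Scope R_scope.

Definition vec := (R * R)%type.

(* The hexagonal lattice Lambda_h = [[1, -1/2],[0, sqrt3/2]] Z^2:
   lh a b is the image of the integer vector (a,b). *)
Definition lh (a b : Z) : vec := (IZR a - IZR b / 2, IZR b * (sqrt 3 / 2)).
Definition in_Lh (x : vec) : Prop := exists a b : Z, x = lh a b.

Definition det2 (v w : vec) : R := fst v * snd w - snd v * fst w.

Definition enorm (v : vec) : R := sqrt (fst v ^ 2 + snd v ^ 2).

Definition span_Z (v w x : vec) : Prop :=
  exists k l : Z, x = (IZR k * fst v + IZR l * fst w, IZR k * snd v + IZR l * snd w).

Definition lattice_basis (G : vec -> Prop) (v w : vec) : Prop :=
  det2 v w <> 0 /\ forall x, G x <-> span_Z v w x.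

Definition full_rank_sublattice_Lh (G : vec -> Prop) : Prop :=
  (exists v w, lattice_basis G v w) /\ forall x, G x -> in_Lh x.

Definition lattice_det (G : vec -> Prop) (d : R) : Prop :=
  exists v w, lattice_basis G v w /\ d = Rabs (det2 v w).

Definition det_Lh : R := Rabs (det2 (lh 1 0) (lh 0 1)).

Definition lattice_index (G : vec -> Prop) (N : R) : Prop :=
  exists d, lattice_det G d /\ N = d / det_Lh.

Definition well_rounded (G : vec -> Prop) : Prop :=
  exists v w, lattice_basis G v w /\
    (forall x, G x -> x <> (0, 0) -> enorm v <= enorm x) /\
    (forall x, G x -> x <> (0, 0) -> enorm w <= enorm x).

Definition prod_distinct_primes_1mod3 (d : Z) : Prop :=
  exists ps : list Z, NoDup ps /\
    (forall p, In p ps -> prime p /\ Z.modulo p 3 = 1%Z) /\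
    d = fold_right Z.mul 1%Z ps.

From Stdlib Require Import Reals ZArith List Znumtheory Lia Lra Classical Zwf.
From mathcomp Require all_boot all_algebra all_fingroup pgroup cyclic ring zify ssrZ.

(* Write lh a b = a + b ω with ω = e^(2πi/3): Λ_h becomes the ring of Eisenstein integers and
   squared lengths become values of the norm form N(a, b) = a^2 - a b + b^2.  A well-rounded
   sublattice has a basis v, w with N(v) = N(w) <= N(v +- w).  Then v + w and v - w are
   orthogonal, v + w = g s and v - w = h t with s, t primitive and i√3 s = f t, f ∈ {1, 3}, so
   |det (v, w)| = M (2m - n) n with M = N(s) or N(t), and the inequalities N(v) <= N(v +- w)
   say exactly that n <= m <= 2n.  Conversely (p + q ω)(m + (m - n) ω) and
   (p + q ω)((m - n) + m ω) form a reduced basis with this determinant.  The positive values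
   of N are the numbers 3^u j^2 d (Fermat's theorem for primes p = 1 mod 3 by Thue's lemma,
   while a prime q = 2 mod 3 dividing a norm divides both coordinates), and a common factor of
   m, n, or a factor 3 of m + n, can be moved into M. *)

(* Cube roots of unity modulo p live in the unit group of 'F_p: one of order 3 exists iff 3
   divides its order p - 1. *)
Module CubeRootsModPrime.
Import all_boot all_algebra all_fingroup pgroup cyclic ring zify ssrZ.
Import GRing.Theory.
Local Open Scope ring_scope.

Lemma cube_root_unity_factor (R : comNzRingType) (y : R) :
  y ^+ 3 - 1 = (y - 1) * (y ^+ 2 + y + 1).
Proof. by ring. Qed.

Lemma finField_cube_root_of_unity (F : finFieldType) :
  (3 %| #|F|.-1)%N -> exists y : F, y ^+ 2 + y + 1 = 0.
Proof.
rewrite -finalg.card_finField_unit => /(Cauchy (isT : prime 3)) [u _ ou].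
have : (val u - 1) * (val u ^+ 2 + val u + 1) = 0 :> F.
  by rewrite -cube_root_unity_factor -FinRing.val_unitX -ou expg_order subrr.
move/eqP; rewrite mulf_eq0 subr_eq0 => /orP[/eqP u1 | /eqP]; last by exists (val u).
have u_1 : u = 1%g by apply: val_inj.
by move: ou; rewrite u_1 order1.
Qed.

Lemma finField_card_cube_root_of_unity (F : finFieldType) (y : F) :
  y ^+ 2 + y + 1 = 0 -> y != 1 -> (3 %| #|F|.-1)%N.
Proof.
move=> y0 y1; have y3 : y ^+ 3 = 1.
  by apply/eqP; rewrite -subr_eq0 cube_root_unity_factor y0 mulr0.
have yu : y \is a GRing.unit by apply/unitrP; exists (y ^+ 2); rewrite -exprSr -exprS y3.
pose u : {unit F} := FinRing.Unit yu.
have <- : #[u]%g = 3%N.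
  apply/(prime_nt_dvdP (isT : prime 3)).
    by rewrite order_eq1; apply: contraNneq y1 => /(congr1 val) /= ->.
  by rewrite order_dvdn; apply/eqP/val_inj; rewrite FinRing.val_unitX y3.
by rewrite -finalg.card_finField_unit order_dvdG ?inE.
Qed.

Lemma Zprime_prime (p : Z) : Znumtheory.prime p -> prime (Z.to_nat p).
Proof.
move=> pr_p; have p_ge2 := prime_ge_2 _ pr_p.
apply/primeP; split; first by lia.
move=> d /dvdnP [k Ep]; have d_dvd_p : (Z.of_nat d | p)%Z by exists (Z.of_nat k); lia.
have := prime_divisors _ pr_p _ d_dvd_p; lia.
Qed.

Lemma Zdivide_dvdz (d z : Z) : (d | z)%Z <-> (int_of_Z d %| int_of_Z z)%Z.
Proof.
split=> [[c ->] | /dvdzP [q Ez]]; first by apply/dvdzP; exists (int_of_Z c); lia.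
by exists (Z_of_int q); lia.
Qed.

Lemma Zdivide_Fp (P z : Z) (pr_P : Znumtheory.prime P) :
  (P | z)%Z <-> (int_of_Z z)%:~R = 0 :> 'F_(Z.to_nat P).
Proof.
have pr_p := Zprime_prime P pr_P; have P_ge2 := prime_ge_2 _ pr_P.
rewrite Zdivide_dvdz; have -> : int_of_Z P = (Z.to_nat P)%:Z by lia.
by rewrite (dvdz_pcharf (pchar_Fp pr_p)); split=> /eqP.
Qed.

Local Open Scope Z_scope.

Lemma Zprime_cube_root_iff (P : Z) : Znumtheory.prime P -> P <> 3 ->
  (exists y : Z, (P | y * y + y + 1)) <-> P mod 3 = 1.
Proof.
move=> pr_P P_neq3; have pr_p := Zprime_prime P pr_P; have P_ge2 := prime_ge_2 _ pr_P.
have card_F : #|'F_(Z.to_nat P)|.-1 = (Z.to_nat P).-1 by rewrite card_Fp.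
split=> [[y] | P1].
  rewrite Zdivide_Fp // (_ : int_of_Z _ = int_of_Z y ^+ 2 + int_of_Z y + 1)%R; last by lia.
  rewrite !rmorphD rmorphXn /= rmorph1 => y0.
  suff: (3 %| #|'F_(Z.to_nat P)|.-1)%N by rewrite card_F; Z.div_mod_to_equations; lia.
  apply: (@finField_card_cube_root_of_unity 'F_(Z.to_nat P) _ y0); apply/eqP => y1.
  move: y0; rewrite y1 (_ : 1 ^+ 2 + 1 + 1 = 3%:R)%R => [/eqP|]; last by rewrite expr1n; ring.
  rewrite -(dvdn_pcharf (pchar_Fp pr_p)) dvdn_prime2 //; lia.
have [y y0] : exists y : 'F_(Z.to_nat P), (y ^+ 2 + y + 1 = 0)%R.
  by apply: finField_cube_root_of_unity; rewrite card_F; Z.div_mod_to_equations; lia.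
exists (Z.of_nat y); rewrite Zdivide_Fp //.
rewrite (_ : int_of_Z _ = (y : nat)%:Z ^+ 2 + (y : nat)%:Z + 1)%R; last by lia.
by rewrite !rmorphD rmorphXn /= rmorph1 -pmulrn natr_Zp.
Qed.

End CubeRootsModPrime.

Open Scope Z_scope.

Definition eis_norm (a b : Z) : Z := a * a - a * b + b * b.

Definition eis_rep (M : Z) : Prop := exists a b, M = eis_norm a b.

Lemma eis_norm_nonneg a b : 0 <= eis_norm a b.
Proof. unfold eis_norm; nia. Qed.

Lemma eis_norm_pos a b : a <> 0 \/ b <> 0 -> 0 < eis_norm a b.
Proof. intros Hab; unfold eis_norm; destruct Hab; nia. Qed.

Lemma eis_norm_mul a b c d :
  eis_norm a b * eis_norm c d = eis_norm (a * c - b * d) (a * d + b * c - b * d).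
Proof. unfold eis_norm; ring. Qed.

Lemma eis_rep_mul M N : eis_rep M -> eis_rep N -> eis_rep (M * N).
Proof.
  intros [a [b ->]] [c [d ->]].
  exists (a * c - b * d), (a * d + b * c - b * d); apply eis_norm_mul.
Qed.

Lemma eis_norm_even a b : (2 | eis_norm a b) -> (2 | a) /\ (2 | b).
Proof.
  intros [k Hk]; unfold eis_norm in Hk.
  destruct (Z.Even_or_Odd a) as [[a' ->] | [a' ->]];
    destruct (Z.Even_or_Odd b) as [[b' ->] | [b' ->]];
    try (split; [exists a' | exists b']; ring); exfalso; nia.
Qed.

Lemma prime_2mod3_dvd_eis_norm q a b :
  prime q -> q mod 3 = 2 -> (q | eis_norm a b) -> (q | a) /\ (q | b).
Proof.
  intros Hq Hq2 HqQ.
  destruct (Zdivide_dec q b) as [Hqb | Hqb].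
  - split; [|exact Hqb].
    assert (Ha2 : (q | a * a)).
    { replace (a * a) with (eis_norm a b - b * (b - a)) by (unfold eis_norm; ring).
      apply Z.divide_sub_r; [exact HqQ | now apply Z.divide_mul_l]. }
    now destruct (prime_mult _ Hq _ _ Ha2).
  - (* y = -a/b mod q would be a root of y^2 + y + 1 mod q. *)
    exfalso.
    destruct (rel_prime_bezout _ _ (prime_rel_prime _ Hq _ Hqb)) as [t s Hts].
    set (y := - (a * s)).
    assert (Hy : (q | y * y + y + 1)).
    { replace (y * y + y + 1)
        with (s * s * eis_norm a b + q * (t * y + t * (s * b + 1))
              + (1 - (t * q + s * b)) * (y + s * b + 1)) by (unfold y, eis_norm; ring).
      rewrite Hts, Z.sub_diag, Z.mul_0_l, Z.add_0_r.
      apply Z.divide_add_r; [now apply Z.divide_mul_r | now apply Z.divide_mul_l]. }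
    assert (Hq3 : q <> 3) by (intros ->; discriminate).
    pose proof (proj1 (CubeRootsModPrime.Zprime_cube_root_iff q Hq Hq3) (ex_intro _ y Hy)).
    congruence.
Qed.

Lemma pigeonhole_nat (f : nat -> nat) (N M : nat) :
  (M < N)%nat -> (forall i, (i < N)%nat -> (f i < M)%nat) ->
  exists i j, (i < N)%nat /\ (j < N)%nat /\ i <> j /\ f i = f j.
Proof.
  intros HMN Hf; apply NNPP; intros Hinj.
  assert (Hnd : NoDup (map f (seq 0 N))).
  { apply NoDup_map_NoDup_ForallPairs; [|apply seq_NoDup].
    intros i j Hi Hj Hij; apply in_seq in Hi, Hj.
    apply NNPP; intros Hne; apply Hinj; exists i, j; repeat split; lia. }
  assert (Hincl : incl (map f (seq 0 N)) (seq 0 M)).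
  { intros z Hz; apply in_map_iff in Hz; destruct Hz as [i [<- Hi]].
    apply in_seq in Hi; apply in_seq; specialize (Hf i); lia. }
  pose proof (NoDup_incl_length Hnd Hincl) as Hlen.
  rewrite length_map, !length_seq in Hlen; lia.
Qed.

(* Thue's lemma: pigeonhole on the (k+1)^2 > p residues of i + x j with 0 <= i, j <= k,
   the pairs (i, j) being encoded by the naturals n = i + (k+1) j. *)
Lemma thue p x : 0 < p ->
  exists X Y, (X <> 0 \/ Y <> 0) /\ Z.abs X <= Z.sqrt p /\ Z.abs Y <= Z.sqrt p /\
              (p | X + x * Y).
Proof.
  intros Hp.
  set (k := Z.sqrt p); destruct (Z.sqrt_spec p ltac:(lia)) as [_ Hk].
  assert (Hk0 : 0 <= k) by apply Z.sqrt_nonneg; fold k in Hk.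
  set (K := Z.to_nat (k + 1)); assert (HK : Z.of_nat K = k + 1) by (unfold K; lia).
  set (res n := (Z.of_nat (n mod K) + x * Z.of_nat (n / K)) mod p).
  assert (Hres : forall n, 0 <= res n < p) by (intros n; apply Z.mod_pos_bound, Hp).
  destruct (pigeonhole_nat (fun n => Z.to_nat (res n)) (K * K) (Z.to_nat p))
    as [i [j [Hi [Hj [Hij Hresij]]]]].
  - lia.
  - intros n _; specialize (Hres n); lia.
  - assert (Hres' : res i = res j) by (pose proof (Hres i); pose proof (Hres j); lia).
    assert (Hdiv : forall n, (n < K * K)%nat -> (n / K < K)%nat /\ (n mod K < K)%nat).
    { intros n Hn; split; [apply Nat.Div0.div_lt_upper_bound | apply Nat.mod_upper_bound]; lia. }
    destruct (Hdiv i Hi), (Hdiv j Hj).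
    pose proof (Nat.div_mod_eq i K); pose proof (Nat.div_mod_eq j K).
    exists (Z.of_nat (i mod K) - Z.of_nat (j mod K)), (Z.of_nat (i / K) - Z.of_nat (j / K)).
    repeat split; try lia.
    unfold res in Hres'; apply Z.cong_iff_ex in Hres'.
    replace (_ + _) with (Z.of_nat (i mod K) + x * Z.of_nat (i / K)
                          - (Z.of_nat (j mod K) + x * Z.of_nat (j / K))) by ring.
    exact Hres'.
Qed.

Lemma prime_sqrt_lt p : prime p -> Z.sqrt p * Z.sqrt p < p.
Proof.
  intros Hp; pose proof (prime_ge_2 _ Hp).
  pose proof (Z.sqrt_spec p ltac:(lia)) as [Hle _].
  destruct (Z.eq_dec (Z.sqrt p * Z.sqrt p) p) as [Hsq | Hsq]; [|lia].
  assert (Hdiv : (Z.sqrt p | p)) by (exists (Z.sqrt p); lia).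
  destruct (prime_divisors _ Hp _ Hdiv) as [E | [E | [E | E]]]; rewrite E in Hsq; nia.
Qed.

(* Fermat: x^2 + x + 1 = 0 mod p, and Thue's short solution of X = -x Y mod p has norm
   divisible by p and below 3p, hence equal to p (2p is ruled out by parity). *)
Lemma eis_rep_prime_1mod3 p : prime p -> p mod 3 = 1 -> eis_rep p.
Proof.
  intros Hp Hp1; pose proof (prime_ge_2 _ Hp) as Hp2.
  assert (Hp3 : p <> 3) by (intros ->; discriminate).
  destruct (proj2 (CubeRootsModPrime.Zprime_cube_root_iff p Hp Hp3) Hp1) as [x [c Hc]].
  destruct (thue p x ltac:(lia)) as [X [Y [HXY [HX [HY [w Hw]]]]]].
  pose proof (prime_sqrt_lt p Hp) as Hk.
  assert (HQ : eis_norm X Y = p * (Y * Y * c + p * w * w - 2 * w * x * Y - w * Y)).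
  { replace X with (w * p - x * Y) by lia; unfold eis_norm.
    transitivity (Y * Y * (x * x + x + 1) + p * (p * w * w - 2 * w * x * Y - w * Y)); [ring|].
    rewrite Hc; ring. }
  set (r := Y * Y * c + p * w * w - 2 * w * x * Y - w * Y) in HQ.
  pose proof (eis_norm_pos X Y HXY) as Hpos.
  assert (Hlt : eis_norm X Y < 3 * p) by (unfold eis_norm in *; nia).
  assert (Hr : r = 1 \/ r = 2) by nia.
  destruct Hr as [Hr | Hr]; [exists X, Y; lia | exfalso].
  destruct (eis_norm_even X Y) as [[X' ->] [Y' ->]]; [exists p; lia|].
  assert (H2p : (2 | p)) by (exists (eis_norm X' Y'); unfold eis_norm in *; lia).
  destruct (prime_divisors _ Hp _ H2p) as [E | [E | [E | E]]]; try lia.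
  rewrite <- E in Hp1; discriminate.
Qed.

Definition eis_shape (M : Z) : Prop :=
  exists u j d, (u = 0 \/ u = 1) /\ 0 < j /\ 0 < d /\ prod_distinct_primes_1mod3 d /\
    M = 3 ^ u * j ^ 2 * d.

Lemma prod_primes_1mod3_pos ps :
  (forall p, In p ps -> prime p /\ p mod 3 = 1) -> 0 < fold_right Z.mul 1 ps.
Proof.
  induction ps as [|p ps IH]; simpl; intros Hps; [lia|].
  destruct (Hps p (or_introl eq_refl)) as [Hp _]; pose proof (prime_ge_2 _ Hp).
  assert (0 < fold_right Z.mul 1 ps) by (apply IH; auto); nia.
Qed.

Lemma fold_mul_app_cons l1 p l2 :
  fold_right Z.mul 1 (l1 ++ p :: l2) = p * fold_right Z.mul 1 (l1 ++ l2).
Proof. induction l1 as [|a l IH]; simpl; [ring | rewrite IH; ring]. Qed.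

Lemma eis_shape_1 : eis_shape 1.
Proof.
  exists 0, 1, 1; repeat split; try lia.
  exists nil; split; [constructor | split; [intros p [] | reflexivity]].
Qed.

Lemma eis_shape_mul_sq M k : eis_shape M -> 0 < k -> eis_shape (k * k * M).
Proof.
  intros [u [j [d [Hu [Hj [Hd [Hdp ->]]]]]]] Hk.
  exists u, (k * j), d; repeat split; try assumption; [nia | ring].
Qed.

Lemma eis_shape_mul_3 M : eis_shape M -> eis_shape (3 * M).
Proof.
  intros [u [j [d [[-> | ->] [Hj [Hd [Hdp ->]]]]]]].
  - exists 1, j, d; repeat split; try assumption; [lia | ring].
  - exists 0, (3 * j), d; repeat split; try assumption; [lia | lia | ring].
Qed.

Lemma eis_shape_mul_prime_1mod3 M p :
  eis_shape M -> prime p -> p mod 3 = 1 -> eis_shape (p * M).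
Proof.
  intros [u [j [d [Hu [Hj [Hd [[ps [Hnd [Hps ->]]] ->]]]]]]] Hp Hp1.
  pose proof (prime_ge_2 _ Hp).
  destruct (in_dec Z.eq_dec p ps) as [Hin | Hin].
  - destruct (in_split _ _ Hin) as [l1 [l2 ->]].
    assert (Hps' : forall q, In q (l1 ++ l2) -> prime q /\ q mod 3 = 1).
    { intros q Hq; apply Hps, in_app_iff; apply in_app_iff in Hq; simpl; tauto. }
    exists u, (p * j), (fold_right Z.mul 1 (l1 ++ l2)).
    split; [exact Hu | split; [nia | split; [now apply prod_primes_1mod3_pos | split]]].
    + exists (l1 ++ l2); split; [eapply NoDup_remove_1; eauto | split; [exact Hps' | reflexivity]].
    + rewrite fold_mul_app_cons; ring.
  - pose proof (prod_primes_1mod3_pos ps Hps).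
    exists u, j, (p * fold_right Z.mul 1 ps).
    split; [exact Hu | split; [exact Hj | split; [nia | split]]].
    + exists (p :: ps); split; [now constructor | split; [|reflexivity]].
      intros q [<- | Hq]; auto.
    + ring.
Qed.

Lemma eis_rep_shape M : eis_shape M -> eis_rep M.
Proof.
  intros [u [j [d [Hu [Hj [Hd [[ps [_ [Hps ->]]] ->]]]]]]].
  apply eis_rep_mul; [apply eis_rep_mul|].
  - destruct Hu as [-> | ->]; [exists 1, 0 | exists 2, 1]; reflexivity.
  - exists j, 0; unfold eis_norm; ring.
  - clear Hd; revert Hps; induction ps as [|p ps IH]; simpl; intros Hps.
    + exists 1, 0; reflexivity.
    + destruct (Hps p (or_introl eq_refl)) as [Hp Hp1].
      apply eis_rep_mul; [now apply eis_rep_prime_1mod3|].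
      apply IH; intros q Hq; apply Hps; now right.
Qed.

Lemma exists_prime_divisor n : 1 < n -> exists p, prime p /\ (p | n).
Proof.
  induction n as [n IH] using (well_founded_induction (Zwf_well_founded 0)); intros Hn.
  destruct (prime_dec n) as [Hp | Hp]; [exists n; split; [exact Hp | apply Z.divide_refl]|].
  destruct (not_prime_divide n Hn Hp) as [m [Hm Hmn]].
  destruct (IH m ltac:(unfold Zwf; lia) ltac:(lia)) as [p [Hpr Hpm]].
  exists p; split; [exact Hpr | eapply Z.divide_trans; eauto].
Qed.

Definition free_of_2mod3_primes (c : Z) : Prop :=
  forall q, prime q -> (q | c) -> q mod 3 <> 2.

Lemma free_of_2mod3_primes_mul q c :
  prime q -> q mod 3 <> 2 -> free_of_2mod3_primes c -> free_of_2mod3_primes (q * c).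
Proof.
  intros Hq Hq2 Hc r Hr Hrqc; pose proof (prime_ge_2 _ Hr); pose proof (prime_ge_2 _ Hq).
  destruct (prime_mult _ Hr _ _ Hrqc) as [Hrq | Hrc]; [|now apply Hc].
  destruct (prime_divisors _ Hq _ Hrq) as [E | [E | [E | E]]]; try lia; now subst r.
Qed.

(* Induction on M: a prime factor q of M is moved into c when q is 3 or 1 mod 3, while a prime
   q = 2 mod 3 divides both coordinates, so q^2 comes out of M (q cannot divide c). *)
Lemma eis_shape_of_dvd_norm M c a b :
  0 < M -> 0 < c -> free_of_2mod3_primes c -> M * c = eis_norm a b -> eis_shape M.
Proof.
  revert c a b.
  induction M as [M IH] using (well_founded_induction (Zwf_well_founded 0)).
  intros c a b HM Hc Hcfree HMc.
  destruct (Z.eq_dec M 1) as [-> | HM1]; [exact eis_shape_1|].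
  destruct (exists_prime_divisor M ltac:(lia)) as [q [Hq [M' HM']]].
  pose proof (prime_ge_2 _ Hq); subst M.
  assert (HM' : 0 < M' < M' * q) by nia.
  assert (Hq3 : q mod 3 = 0 \/ q mod 3 = 1 \/ q mod 3 = 2)
    by (pose proof (Z.mod_pos_bound q 3 ltac:(lia)); lia).
  destruct Hq3 as [Hq0 | [Hq1 | Hq2]].
  - assert (q = 3).
    { apply Z.mod_divide in Hq0; [|lia].
      destruct (prime_divisors _ Hq _ Hq0) as [E | [E | [E | E]]]; lia. }
    subst q; rewrite Z.mul_comm; apply eis_shape_mul_3.
    apply (IH M' ltac:(unfold Zwf; lia) (3 * c) a b); try lia.
    apply free_of_2mod3_primes_mul; auto; lia.
  - rewrite Z.mul_comm; apply eis_shape_mul_prime_1mod3; auto.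
    apply (IH M' ltac:(unfold Zwf; lia) (q * c) a b); try lia.
    apply free_of_2mod3_primes_mul; auto; lia.
  - assert (HqQ : (q | eis_norm a b)) by (exists (M' * c); lia).
    destruct (prime_2mod3_dvd_eis_norm q a b Hq Hq2 HqQ) as [[a' ->] [b' ->]].
    assert (HM'c : M' * c = q * eis_norm a' b').
    { apply (Z.mul_reg_l _ _ q); [lia|]; unfold eis_norm in *; nia. }
    assert (Hqd : (q | M' * c)) by (exists (eis_norm a' b'); lia).
    destruct (prime_mult _ Hq _ _ Hqd) as [[M'' ->] | Hqc]; [|exfalso; now apply (Hcfree q)].
    replace (M'' * q * q) with (q * q * M'') by ring.
    apply eis_shape_mul_sq; [|lia].
    apply (IH M'' ltac:(unfold Zwf; nia) c a' b'); [nia | exact Hc | exact Hcfree |].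
    apply (Z.mul_reg_l _ _ q); [lia|]; nia.
Qed.

Lemma eis_rep_iff_shape M : 0 < M -> eis_rep M <-> eis_shape M.
Proof.
  intros HM; split; [|apply eis_rep_shape].
  intros [a [b HMab]]; apply (eis_shape_of_dvd_norm M 1 a b HM ltac:(lia)); [|lia].
  intros q Hq Hq1; apply Z.divide_pos_le in Hq1; pose proof (prime_ge_2 _ Hq); lia.
Qed.

Definition hex_wr_index (N : Z) : Prop :=
  exists u j d m n, (u = 0 \/ u = 1) /\ 0 < j /\ 0 < d /\ 0 < m /\ 0 < n /\
    prod_distinct_primes_1mod3 d /\ Z.gcd m n = 1 /\ ~ (3 | m + n) /\ n <= m <= 2 * n /\
    N = 3 ^ u * j ^ 2 * d * (2 * m - n) * n.

(* Induction on m: a common factor g of m, n moves into M as g^2, and if m + n = 3 w then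
   (m, n) can be replaced by (w, m - w) at the cost of a factor 3 in M. *)
Lemma hex_wr_index_normalize M m n :
  eis_shape M -> 0 < n <= m -> m <= 2 * n -> hex_wr_index (M * (2 * m - n) * n).
Proof.
  revert M n.
  induction m as [m IH] using (well_founded_induction (Zwf_well_founded 0)).
  intros M n HM Hnm Hm2n.
  destruct (Z.eq_dec (Z.gcd m n) 1) as [Hg1 | Hg1].
  - destruct (Zdivide_dec 3 (m + n)) as [[w Hw] | H3].
    + replace (M * (2 * m - n) * n) with (3 * M * (2 * w - (m - w)) * (m - w)) by nia.
      apply IH; [unfold Zwf; lia | now apply eis_shape_mul_3 | lia | lia].
    + destruct HM as [u [j [d [Hu [Hj [Hd [Hdp ->]]]]]]].
      exists u, j, d, m, n; repeat split; try assumption; lia.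
  - pose proof (Z.gcd_nonneg m n) as Hg0.
    assert (Hg : Z.gcd m n <> 0) by (intros E; apply Z.gcd_eq_0 in E; lia).
    destruct (Z.gcd_divide_l m n) as [m1 Hm1], (Z.gcd_divide_r m n) as [n1 Hn1].
    set (g := Z.gcd m n) in *; clearbody g.
    replace (M * (2 * m - n) * n) with (g * g * M * (2 * m1 - n1) * n1) by (subst m n; ring).
    apply IH; [unfold Zwf; nia | apply eis_shape_mul_sq; [assumption | lia] | nia | nia].
Qed.

Lemma primitive_decomposition x y :
  x <> 0 \/ y <> 0 -> exists g x0 y0, 0 < g /\ x = g * x0 /\ y = g * y0 /\ Z.gcd x0 y0 = 1.
Proof.
  intros Hxy; set (g := Z.gcd x y).
  assert (Hg : 0 < g).
  { pose proof (Z.gcd_nonneg x y); enough (g <> 0) by lia.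
    intros E; apply Z.gcd_eq_0 in E; lia. }
  exists g, (x / g), (y / g); repeat split; [exact Hg | | |].
  - apply Zdivide_Zdiv_eq; [exact Hg | apply Z.gcd_divide_l].
  - apply Zdivide_Zdiv_eq; [exact Hg | apply Z.gcd_divide_r].
  - apply Z.gcd_div_gcd; [lia | reflexivity].
Qed.

Lemma primitive_nonzero x y : Z.gcd x y = 1 -> x <> 0 \/ y <> 0.
Proof.
  intros Hxy; apply NNPP; intros H0; assert (x = 0 /\ y = 0) as [-> ->] by lia; discriminate. Qed.

Lemma dvd_of_dvd_mul_primitive d k x y :
  Z.gcd x y = 1 -> (d | k * x) -> (d | k * y) -> (d | k).
Proof.
  intros Hxy Hx Hy.
  assert (Hd : (d | Z.gcd (k * x) (k * y))) by (apply Z.gcd_greatest; assumption).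
  rewrite Z.gcd_mul_mono_l, Hxy, Z.mul_1_r in Hd; now rewrite Z.divide_abs_r in Hd.
Qed.

Lemma multiple_of_primitive p1 p2 x1 x2 :
  Z.gcd p1 p2 = 1 -> x1 * p2 = x2 * p1 -> exists h, x1 = h * p1 /\ x2 = h * p2.
Proof.
  intros Hp Hx; destruct (Z.gcd_bezout _ _ _ Hp) as [u [v Huv]].
  exists (u * x1 + v * x2); split.
  - transitivity (x1 * (u * p1 + v * p2)); [rewrite Huv; ring|].
    transitivity ((u * x1 + v * x2) * p1 + v * (x1 * p2 - x2 * p1)); [ring|]; rewrite Hx; ring.
  - transitivity (x2 * (u * p1 + v * p2)); [rewrite Huv; ring|].
    transitivity ((u * x1 + v * x2) * p2 - u * (x1 * p2 - x2 * p1)); [ring|]; rewrite Hx; ring.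
Qed.

(* (a0 - 2 b0) + (2 a0 - b0) ω = (1 + 2 ω)(a0 + b0 ω), and 1 + 2 ω = i√3. *)
Lemma rotation_content a0 b0 f p1 p2 :
  Z.gcd a0 b0 = 1 -> 0 < f -> f * p1 = a0 - 2 * b0 -> f * p2 = 2 * a0 - b0 -> f = 1 \/ f = 3.
Proof.
  intros Hab Hf Hp1 Hp2.
  assert (Hf3 : (f | 3)).
  { apply (dvd_of_dvd_mul_primitive f 3 a0 b0 Hab).
    - exists (2 * p2 - p1); nia.
    - exists (p2 - 2 * p1); nia. }
  pose proof (Z.divide_pos_le f 3 ltac:(lia) Hf3).
  destruct Hf3 as [z Hz]; assert (f = 1 \/ f = 2 \/ f = 3) by lia; lia.
Qed.

(* |v| = |w| makes v + w and v - w orthogonal: with v + w = g s and s primitive, v - w is a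
   multiple h t of the primitive vector t = (1 + 2 ω) s / f. *)
Lemma orthogonal_decomposition a b c e :
  eis_norm a b = eis_norm c e -> a * e - b * c <> 0 ->
  exists g h f a0 b0 p1 p2, 0 < g /\ h <> 0 /\ (f = 1 \/ f = 3) /\ Z.gcd a0 b0 = 1 /\
    a + c = g * a0 /\ b + e = g * b0 /\ a - c = h * p1 /\ b - e = h * p2 /\
    f * p1 = a0 - 2 * b0 /\ f * p2 = 2 * a0 - b0.
Proof.
  intros Hvw HD.
  destruct (primitive_decomposition (a + c) (b + e)) as [g [a0 [b0 [Hg [Ha0 [Hb0 Hs]]]]]].
  { apply NNPP; intros Hsum; apply HD.
    replace c with (- a) by lia; replace e with (- b) by lia; ring. }
  destruct (primitive_decomposition (a0 - 2 * b0) (2 * a0 - b0))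
    as [f [p1 [p2 [Hf [Hp1 [Hp2 Ht]]]]]].
  { apply NNPP; intros Hrot; assert (a0 = 0 /\ b0 = 0) as [-> ->] by lia; discriminate. }
  assert (Hperp : g * f * ((a - c) * p2 - (b - e) * p1) = 0).
  { transitivity ((a - c) * (2 * (a + c) - (b + e)) + (b - e) * (2 * (b + e) - (a + c))).
    - rewrite Ha0, Hb0.
      transitivity ((a - c) * (g * (2 * a0 - b0)) - (b - e) * (g * (a0 - 2 * b0))); [|ring].
      rewrite Hp1, Hp2; ring.
    - transitivity (2 * (eis_norm a b - eis_norm c e)); [unfold eis_norm; ring|].
      rewrite Hvw; ring. }
  destruct (multiple_of_primitive p1 p2 (a - c) (b - e) Ht) as [h [Hh1 Hh2]].
  { apply Z.mul_eq_0 in Hperp; destruct Hperp as [Hgf | Hperp]; [nia | lia]. }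
  exists g, h, f, a0, b0, p1, p2; repeat split; try lia.
  exact (rotation_content a0 b0 f p1 p2 Hs Hf (eq_sym Hp1) (eq_sym Hp2)).
Qed.

Lemma decomposition_identities a b c e g h f a0 b0 p1 p2 :
  a + c = g * a0 -> b + e = g * b0 -> a - c = h * p1 -> b - e = h * p2 ->
  f * p1 = a0 - 2 * b0 -> f * p2 = 2 * a0 - b0 ->
  f * (a * e - b * c) = - (g * h * eis_norm a0 b0) /\
  f * f * eis_norm p1 p2 = 3 * eis_norm a0 b0 /\
  eis_norm (a + c) (b + e) = g * g * eis_norm a0 b0 /\
  eis_norm (a - c) (b - e) = h * h * eis_norm p1 p2.
Proof.
  intros Hac Hbe Hac' Hbe' Hp1 Hp2; repeat split.
  - apply (Z.mul_reg_l _ _ 2); [lia|].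
    replace (2 * (f * (a * e - b * c))) with (f * ((a - c) * (b + e) - (a + c) * (b - e)))
      by ring.
    rewrite Hac, Hbe, Hac', Hbe'.
    replace (f * (h * p1 * (g * b0) - g * a0 * (h * p2)))
      with (g * h * (b0 * (f * p1) - a0 * (f * p2))) by ring.
    rewrite Hp1, Hp2; unfold eis_norm; ring.
  - unfold eis_norm.
    replace (f * f * (p1 * p1 - p1 * p2 + p2 * p2))
      with ((f * p1) * (f * p1) - (f * p1) * (f * p2) + (f * p2) * (f * p2)) by ring.
    rewrite Hp1, Hp2; ring.
  - rewrite Hac, Hbe; unfold eis_norm; ring.
  - rewrite Hac', Hbe'; unfold eis_norm; ring.
Qed.

(* 2 f v = g f s + h (1 + 2 ω) s = (g f + h) s mod 2, and s is primitive. *)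
Lemma decomposition_parity a b c e g h f a0 b0 p1 p2 :
  Z.gcd a0 b0 = 1 -> a + c = g * a0 -> b + e = g * b0 -> a - c = h * p1 -> b - e = h * p2 ->
  f * p1 = a0 - 2 * b0 -> f * p2 = 2 * a0 - b0 -> (2 | g * f + h).
Proof.
  intros Hs Hac Hbe Hac' Hbe' Hp1 Hp2.
  apply (dvd_of_dvd_mul_primitive 2 (g * f + h) a0 b0 Hs);
    [exists (f * a + h * b0) | exists (f * b - h * a0 + h * b0)].
  - transitivity (f * (a + c) + h * a0); [rewrite Hac; ring|].
    replace (f * (a + c)) with (2 * f * a - h * (f * p1))
      by (replace (h * (f * p1)) with (f * (a - c)) by (rewrite Hac'; ring); ring).
    rewrite Hp1; ring.
  - transitivity (f * (b + e) + h * b0); [rewrite Hbe; ring|].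
    replace (f * (b + e)) with (2 * f * b - h * (f * p2))
      by (replace (h * (f * p2)) with (f * (b - e)) by (rewrite Hbe'; ring); ring).
    rewrite Hp2; ring.
Qed.

Lemma index_of_side_lengths D M x y :
  0 < M -> 0 < y -> 0 <= x -> x * x * M <= 9 * (y * y * M) -> y * y * M <= x * x * M ->
  (2 | x + y) -> Z.abs D = M * x * y ->
  exists m n, 0 < n <= m /\ m <= 2 * n /\ Z.abs D = M * (2 * m - n) * n.
Proof.
  intros HM Hy Hx Hx3 Hxy [w Hw] HD.
  assert (Hyx : y <= x).
  { apply Z.square_le_simpl_nonneg; [lia|]; apply (Z.mul_le_mono_pos_r _ _ M HM); lia. }
  assert (Hx3y : x <= 3 * y).
  { apply Z.square_le_simpl_nonneg; [lia|]; apply (Z.mul_le_mono_pos_r _ _ M HM); nia. }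
  exists w, y; repeat split; lia.
Qed.

(* With v = (a, b) and w = (c, e) of equal norm and v +- w no shorter, the decomposition
   v + w = g s, v - w = h t gives |det (v, w)| = g |h| N(s) / f with N(t) = 3 N(s) / f^2,
   and N(v) <= N(v +- w) with N(v + w) + N(v - w) = 4 N(v) bounds the ratio of g and |h|. *)
Lemma reduced_basis_index a b c e :
  eis_norm a b = eis_norm c e ->
  eis_norm a b <= eis_norm (a - c) (b - e) -> eis_norm a b <= eis_norm (a + c) (b + e) ->
  a * e - b * c <> 0 ->
  exists M m n, 0 < M /\ eis_rep M /\ 0 < n <= m /\ m <= 2 * n /\
                Z.abs (a * e - b * c) = M * (2 * m - n) * n.
Proof.
  intros Hvw Hminus Hplus HD.
  destruct (orthogonal_decomposition a b c e Hvw HD)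
    as (g & h & f & a0 & b0 & p1 & p2 & Hg & Hh & Hf & Hs & Hac & Hbe & Hac' & Hbe' & Hp1 & Hp2).
  destruct (decomposition_identities a b c e g h f a0 b0 p1 p2 Hac Hbe Hac' Hbe' Hp1 Hp2)
    as (Hdet & Hrot & Hsum & Hdiff).
  pose proof (decomposition_parity a b c e g h f a0 b0 p1 p2 Hs Hac Hbe Hac' Hbe' Hp1 Hp2)
    as [w Hw].
  assert (Hparallelogram :
            eis_norm (a + c) (b + e) + eis_norm (a - c) (b - e) = 4 * eis_norm a b)
    by (transitivity (2 * eis_norm a b + 2 * eis_norm c e); [unfold eis_norm; ring | lia]).
  set (Q0 := eis_norm a0 b0) in *; set (P := eis_norm p1 p2) in *.
  assert (HQ0 : 0 < Q0) by (apply eis_norm_pos, primitive_nonzero, Hs).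
  set (k := Z.abs h).
  assert (Hk : h * h = k * k) by (unfold k; destruct (Z.abs_spec h) as [[_ ->] | [_ ->]]; ring).
  destruct Hf as [-> | ->].
  - assert (HP3 : P = 3 * Q0) by lia.
    destruct (index_of_side_lengths (a * e - b * c) Q0 g k) as (m & n & Hmn);
      try (rewrite Hk, HP3 in *; lia).
    + unfold k; destruct (Z.abs_spec h) as [[_ ->] | [_ ->]]; [exists w | exists (w - h)]; lia.
    + exists Q0, m, n; split; [lia | split; [exists a0, b0; reflexivity | exact Hmn]].
  - assert (HQ3 : Q0 = 3 * P) by lia.
    destruct (index_of_side_lengths (a * e - b * c) P k g) as (m & n & Hmn);
      try (rewrite Hk, HQ3 in *; lia).
    + unfold k; destruct (Z.abs_spec h) as [[_ ->] | [_ ->]];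
        [exists (w - g) | exists (w - g - h)]; lia.
    + exists P, m, n; split; [lia | split; [exists p1, p2; reflexivity | exact Hmn]].
Qed.

Definition eis_polar (a b c d : Z) : Z := 2 * a * c + 2 * b * d - a * d - b * c.

Lemma eis_norm_comb k l a b c d :
  eis_norm (k * a + l * c) (k * b + l * d)
  = k * k * eis_norm a b + k * l * eis_polar a b c d + l * l * eis_norm c d.
Proof. unfold eis_norm, eis_polar; ring. Qed.

(* N(k v + l w) = N(v) (k^2 + l^2) + k l polar >= N(v) N(k, +-l), with the sign of k l. *)
Lemma eis_norm_comb_ge a b c d k l :
  eis_norm a b = eis_norm c d -> Z.abs (eis_polar a b c d) <= eis_norm a b ->
  k <> 0 \/ l <> 0 -> eis_norm a b <= eis_norm (k * a + l * c) (k * b + l * d).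
Proof.
  intros Hvw HB Hkl; rewrite eis_norm_comb, <- Hvw.
  set (R := eis_norm a b) in *; set (B := eis_polar a b c d) in *.
  pose proof (eis_norm_nonneg a b) as HR; fold R in HR.
  destruct (Z_le_gt_dec 0 (k * l)) as [Hkl0 | Hkl0].
  - pose proof (eis_norm_pos k l Hkl); unfold eis_norm in *.
    assert (0 <= k * l * (B + R)) by (apply Z.mul_nonneg_nonneg; lia).
    assert (0 <= R * (k * k - k * l + l * l - 1)) by (apply Z.mul_nonneg_nonneg; lia).
    nia.
  - pose proof (eis_norm_pos k (- l) ltac:(lia)); unfold eis_norm in *.
    assert (0 <= - (k * l) * (R - B)) by (apply Z.mul_nonneg_nonneg; lia).
    assert (0 <= R * (k * k + k * l + l * l - 1)) by (apply Z.mul_nonneg_nonneg; nia).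
    nia.
Qed.

(* For M = N(p, q), the basis v = (p + q ω)(m + (m - n) ω), w = (p + q ω)((m - n) + m ω). *)
Lemma reduced_basis_of_index M m n :
  eis_rep M -> 0 < n <= m -> m <= 2 * n ->
  exists a b c e, eis_norm a b = eis_norm c e /\ Z.abs (eis_polar a b c e) <= eis_norm a b /\
                  a * e - b * c = M * (2 * m - n) * n.
Proof.
  intros [p [q ->]] Hnm Hm2n.
  exists (p * m - q * (m - n)), (p * (m - n) + q * m - q * (m - n)),
         (p * (m - n) - q * m), (p * m + q * (m - n) - q * m).
  repeat split; [unfold eis_norm; ring | | unfold eis_norm; ring].
  replace (eis_polar _ _ _ _) with (eis_norm p q * eis_polar m (m - n) (m - n) m)
    by (unfold eis_norm, eis_polar; ring).
  replace (eis_norm (p * m - q * (m - n)) _) with (eis_norm p q * eis_norm m (m - n))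
    by (unfold eis_norm; ring).
  pose proof (eis_norm_nonneg p q); rewrite Z.abs_mul, (Z.abs_eq (eis_norm p q)) by lia.
  apply Z.mul_le_mono_nonneg_l; [lia|]; unfold eis_norm, eis_polar.
  apply Z.abs_le; split; nia.
Qed.

Open Scope R_scope.

Lemma sqrt3_pos : 0 < sqrt 3.
Proof. apply sqrt_lt_R0; lra. Qed.

Lemma lh_eq_0 a b : lh a b = (0, 0) -> a = 0%Z /\ b = 0%Z.
Proof.
  unfold lh; intros H; injection H as Ha Hb; pose proof sqrt3_pos.
  assert (Hb0 : IZR b = 0) by nra; apply eq_IZR in Hb0; subst b.
  split; [apply eq_IZR; lra | reflexivity].
Qed.

Lemma det2_lh a b c d : det2 (lh a b) (lh c d) = sqrt 3 / 2 * IZR (a * d - b * c).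
Proof. unfold det2, lh; simpl; rewrite minus_IZR, !mult_IZR; field. Qed.

Lemma det_Lh_eq : det_Lh = sqrt 3 / 2.
Proof.
  unfold det_Lh; rewrite det2_lh; simpl; rewrite Rmult_1_r.
  apply Rabs_right; pose proof sqrt3_pos; lra.
Qed.

Lemma enorm_lh a b : enorm (lh a b) = sqrt (IZR (eis_norm a b)).
Proof.
  unfold enorm, lh, eis_norm; simpl; f_equal.
  rewrite plus_IZR, minus_IZR, !mult_IZR.
  replace (IZR b * (sqrt 3 / 2) * (IZR b * (sqrt 3 / 2) * 1))
    with (IZR b * IZR b * (sqrt 3 * sqrt 3) / 4) by field.
  rewrite sqrt_sqrt by lra; field.
Qed.

Lemma enorm_lh_le a b c d :
  enorm (lh a b) <= enorm (lh c d) <-> (eis_norm a b <= eis_norm c d)%Z.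
Proof.
  rewrite !enorm_lh; split; intros H.
  - apply le_IZR, sqrt_le_0; auto; apply IZR_le, eis_norm_nonneg.
  - apply sqrt_le_1_alt, IZR_le, H.
Qed.

Lemma lh_comb a b c d k l :
  (IZR k * fst (lh a b) + IZR l * fst (lh c d), IZR k * snd (lh a b) + IZR l * snd (lh c d))
  = lh (k * a + l * c) (k * b + l * d).
Proof. unfold lh; simpl; rewrite !plus_IZR, !mult_IZR; f_equal; field. Qed.

Lemma span_Z_l v w : span_Z v w v.
Proof. exists 1%Z, 0%Z; destruct v; simpl; f_equal; ring. Qed.

Lemma span_Z_r v w : span_Z v w w.
Proof. exists 0%Z, 1%Z; destruct w; simpl; f_equal; ring. Qed.

Lemma span_Z_lh a b c d x :
  span_Z (lh a b) (lh c d) x <-> exists k l, x = lh (k * a + l * c) (k * b + l * d).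
Proof.
  split; intros [k [l ->]]; exists k, l; [apply lh_comb | symmetry; apply lh_comb].
Qed.

(* Two bases of the same lattice differ by an integer matrix with integer inverse. *)
Lemma lattice_basis_det G v w v' w' :
  lattice_basis G v w -> lattice_basis G v' w' -> Rabs (det2 v' w') = Rabs (det2 v w).
Proof.
  intros [Hd HG] [Hd' HG'].
  destruct (proj1 (HG v') (proj2 (HG' v') (span_Z_l v' w'))) as [k1 [l1 E1]].
  destruct (proj1 (HG w') (proj2 (HG' w') (span_Z_r v' w'))) as [k2 [l2 E2]].
  destruct (proj1 (HG' v) (proj2 (HG v) (span_Z_l v w))) as [k3 [l3 E3]].
  destruct (proj1 (HG' w) (proj2 (HG w) (span_Z_r v w))) as [k4 [l4 E4]].
  assert (F1 : det2 v' w' = IZR (k1 * l2 - l1 * k2) * det2 v w).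
  { rewrite E1, E2; unfold det2; simpl; rewrite minus_IZR, !mult_IZR; ring. }
  assert (F2 : det2 v w = IZR (k3 * l4 - l3 * k4) * det2 v' w').
  { rewrite E3, E4 at 1; unfold det2; simpl; rewrite minus_IZR, !mult_IZR; ring. }
  assert (F3 : IZR ((k1 * l2 - l1 * k2) * (k3 * l4 - l3 * k4)) = 1).
  { rewrite mult_IZR; apply (Rmult_eq_reg_r (det2 v w)); auto.
    rewrite Rmult_1_l; rewrite F2 at 2; rewrite F1; ring. }
  apply eq_IZR, Z.eq_mul_1 in F3.
  rewrite F1, Rabs_mult; destruct F3 as [E | E]; rewrite E.
  - rewrite Rabs_R1; ring.
  - rewrite opp_IZR, Rabs_Ropp, Rabs_R1; ring.
Qed.

Lemma lattice_index_lh G a b c d x :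
  lattice_basis G (lh a b) (lh c d) -> lattice_index G x -> x = IZR (Z.abs (a * d - b * c)).
Proof.
  intros Hbasis [det [[v [w [Hvw ->]]] ->]].
  rewrite (lattice_basis_det G (lh a b) (lh c d) v w Hbasis Hvw), det2_lh, det_Lh_eq.
  rewrite Rabs_mult, Rabs_Zabs, Rabs_right by (pose proof sqrt3_pos; lra).
  field; pose proof sqrt3_pos; lra.
Qed.

Lemma lh_comb_neq_0 a b c e k l :
  (a * e - b * c <> 0)%Z -> (k <> 0 \/ l <> 0)%Z -> lh (k * a + l * c) (k * b + l * e) <> (0, 0).
Proof.
  intros HD Hkl H0; apply lh_eq_0 in H0; destruct H0 as [Hx Hy].
  assert (Hk : (k * (a * e - b * c) = 0)%Z).
  { transitivity (e * (k * a + l * c) - c * (k * b + l * e))%Z; [ring | rewrite Hx, Hy; ring]. }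
  assert (Hl : (l * (a * e - b * c) = 0)%Z).
  { transitivity (a * (k * b + l * e) - b * (k * a + l * c))%Z; [ring | rewrite Hx, Hy; ring]. }
  apply Z.mul_eq_0 in Hk, Hl; lia.
Qed.

Lemma wr_sublattice_reduced_basis G :
  full_rank_sublattice_Lh G -> well_rounded G ->
  exists a b c e, lattice_basis G (lh a b) (lh c e) /\ (a * e - b * c <> 0)%Z /\
    eis_norm a b = eis_norm c e /\ (eis_norm a b <= eis_norm (a - c) (b - e))%Z /\
    (eis_norm a b <= eis_norm (a + c) (b + e))%Z.
Proof.
  intros [_ Hsub] [v [w [Hbasis [Hv Hw]]]].
  destruct (Hsub v (proj2 (proj2 Hbasis v) (span_Z_l v w))) as [a [b ->]].
  destruct (Hsub w (proj2 (proj2 Hbasis w) (span_Z_r _ w))) as [c [e ->]].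
  assert (HD : (a * e - b * c <> 0)%Z).
  { intros E; apply (proj1 Hbasis); rewrite det2_lh, E; simpl; ring. }
  assert (Hmin : forall k l x y, (k <> 0 \/ l <> 0)%Z ->
            x = (k * a + l * c)%Z -> y = (k * b + l * e)%Z ->
            (eis_norm a b <= eis_norm x y)%Z /\ (eis_norm c e <= eis_norm x y)%Z).
  { intros k l x y Hkl -> ->.
    assert (Hkl' := lh_comb_neq_0 a b c e k l HD Hkl).
    assert (HG : G (lh (k * a + l * c) (k * b + l * e)))
      by (apply (proj2 Hbasis), span_Z_lh; exists k, l; reflexivity).
    split; apply enorm_lh_le; [apply Hv | apply Hw]; assumption. }
  destruct (Hmin 0%Z 1%Z c e) as [Hvw _]; try lia.
  destruct (Hmin 1%Z 0%Z a b) as [_ Hwv]; try lia.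
  destruct (Hmin 1%Z (-1)%Z (a - c) (b - e))%Z as [Hminus _]; try lia.
  destruct (Hmin 1%Z 1%Z (a + c) (b + e))%Z as [Hplus _]; try lia.
  exists a, b, c, e; split; [exact Hbasis | repeat split; try assumption; lia].
Qed.

Lemma wr_sublattice_index G x :
  full_rank_sublattice_Lh G -> well_rounded G -> lattice_index G x ->
  exists N, hex_wr_index N /\ x = IZR N.
Proof.
  intros HG Hwr Hx.
  destruct (wr_sublattice_reduced_basis G HG Hwr)
    as (a & b & c & e & Hbasis & HD & Hvw & Hminus & Hplus).
  destruct (reduced_basis_index a b c e Hvw Hminus Hplus HD)
    as (M & m & n & HM & HMrep & Hnm & Hm2n & Hdet).
  exists (Z.abs (a * e - b * c)); split; [|exact (lattice_index_lh G a b c e x Hbasis Hx)].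
  rewrite Hdet; apply hex_wr_index_normalize; [apply eis_rep_iff_shape | |]; assumption.
Qed.

Lemma wr_sublattice_of_reduced_basis a b c e :
  eis_norm a b = eis_norm c e -> (Z.abs (eis_polar a b c e) <= eis_norm a b)%Z ->
  (0 < a * e - b * c)%Z ->
  full_rank_sublattice_Lh (span_Z (lh a b) (lh c e)) /\
  well_rounded (span_Z (lh a b) (lh c e)) /\
  lattice_index (span_Z (lh a b) (lh c e)) (IZR (a * e - b * c)).
Proof.
  intros Hvw Hpolar Hdet.
  assert (Hbasis : lattice_basis (span_Z (lh a b) (lh c e)) (lh a b) (lh c e)).
  { split; [|tauto]; rewrite det2_lh; apply IZR_lt in Hdet; pose proof sqrt3_pos; nra. }
  assert (Hmin : forall y, span_Z (lh a b) (lh c e) y -> y <> (0, 0) ->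
            enorm (lh a b) <= enorm y).
  { intros y Hy Hy0; apply span_Z_lh in Hy; destruct Hy as [k [l ->]].
    apply enorm_lh_le, eis_norm_comb_ge; try assumption.
    apply NNPP; intros Hkl; apply Hy0; assert (k = 0 /\ l = 0)%Z as [-> ->] by lia.
    unfold lh; simpl; f_equal; lra. }
  split; [split | split].
  - exists (lh a b), (lh c e); exact Hbasis.
  - intros y Hy; apply span_Z_lh in Hy; destruct Hy as [k [l ->]]; eexists; eexists; reflexivity.
  - exists (lh a b), (lh c e); split; [exact Hbasis | split; [exact Hmin|]].
    intros y Hy Hy0; apply Rle_trans with (enorm (lh a b)); [apply enorm_lh_le; lia|].
    now apply Hmin.
  - exists (Rabs (det2 (lh a b) (lh c e))); split; [exists (lh a b), (lh c e); split; auto|].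
    rewrite det2_lh, det_Lh_eq, Rabs_mult, Rabs_Zabs, Z.abs_eq by lia.
    rewrite Rabs_right by (pose proof sqrt3_pos; lra).
    field; pose proof sqrt3_pos; lra.
Qed.

Lemma ratio_bounds_iff m n :
  (0 < n)%Z -> 1 <= IZR m / IZR n <= 2 <-> (n <= m <= 2 * n)%Z.
Proof.
  intros Hn; apply IZR_lt in Hn.
  assert (Hm : IZR m = IZR m / IZR n * IZR n) by (field; lra).
  split.
  - intros [H1 H2]; split; apply le_IZR; rewrite ?mult_IZR; nra.
  - intros [H1 H2]; apply IZR_le in H1, H2; rewrite mult_IZR in H2; split;
      apply (Rmult_le_reg_r (IZR n)); try lra; rewrite <- Hm; lra.
Qed.

Theorem corollary4p10 : forall x : R,
  (exists G : vec -> Prop,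
      full_rank_sublattice_Lh G /\ well_rounded G /\ lattice_index G x) <->
  (exists u j d m n : Z,
      (u = 0%Z \/ u = 1%Z) /\
      (0 < j)%Z /\ (0 < d)%Z /\ (0 < m)%Z /\ (0 < n)%Z /\
      prod_distinct_primes_1mod3 d /\
      Z.gcd m n = 1%Z /\
      ~ (3 | m + n)%Z /\
      1 <= IZR m / IZR n <= 2 /\
      x = IZR (3 ^ u * j ^ 2 * d * (2 * m - n) * n)).
Proof.
  intros x; split.
  - intros (G & HG & Hwr & Hx).
    destruct (wr_sublattice_index G x HG Hwr Hx)
      as (N & (u & j & d & m & n & Hu & Hj & Hd & Hm & Hn & Hdp & Hg & H3 & Hmn & ->) & ->).
    exists u, j, d, m, n; do 8 (split; [assumption|]).
    split; [now apply ratio_bounds_iff | reflexivity].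
  - intros (u & j & d & m & n & Hu & Hj & Hd & Hm & Hn & Hdp & Hg & H3 & Hratio & ->).
    apply ratio_bounds_iff in Hratio; [|exact Hn].
    assert (HM : eis_rep (3 ^ u * j ^ 2 * d)).
    { apply eis_rep_shape; exists u, j, d; repeat split; assumption. }
    destruct (reduced_basis_of_index _ m n HM ltac:(lia) ltac:(lia))
      as (a & b & c & e & Hvw & Hpolar & Hdet).
    assert (Hpos : (0 < 3 ^ u * j ^ 2 * d * (2 * m - n) * n)%Z).
    { assert (0 < 3 ^ u)%Z by (apply Z.pow_pos_nonneg; lia).
      assert (0 < j ^ 2)%Z by (apply Z.pow_pos_nonneg; lia).
      repeat apply Z.mul_pos_pos; lia. }
    exists (span_Z (lh a b) (lh c e)); rewrite <- Hdet.
    apply wr_sublattice_of_reduced_basis; lia.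
Qed.
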